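(* Let $f:\Delta_{\mathcal Y}\to\mathbb R$ be permutation-invariant and convex ($\mathcal Y=\{1,\dots,n\}$), and let $F:\mathrm{Dens}(\mathcal X)\to\mathbb R$ be $F(\rho)=f(\lambda(\rho))$. Then for every $\lambda\in\Delta_{\mathcal Y}$, every unitary $U$ on $\mathcal X=\mathbb C^n$, and every $d\in(\mathbb R\cup\{-\infty\})^n$: $d\in\overline\partial f(\lambda)$ if and only if $U\,\mathrm{Diag}(d)\,U^*\in\overline\partial F(U\,\mathrm{Diag}(\lambda)\,U^* )$.
   Context: $\lambda(A)$ is the vector of eigenvalues of a Hermitian $A$ in decreasing order; $\mathrm{Dens}(\mathcal X)$ the $n\times n$ density matrices, $\langle X,Y\rangle=\mathrm{Tr}(X^*Y)$. $f$ is permutation-invariant if $f(\pi p)=f(p)$ for all permutations $\pi$, $(\pi p)_y=p_{\pi_y}$. For $d\in(\mathbb R\cup\{-\infty\})^n$ and $x\in\mathbb R^n$, $\langle d,x\rangle=\sum_{y:d_y\in\mathbb R}d_yx_y-\infty\sum_{y:d_y=-\infty}x_y$ (with $-\infty\cdot0=0$). For unitary $U$ with columns $u_1,\dots,u_n$, $U\mathrm{Diag}(d)U^*$ denotes the extended Hermitian matrix $A-\infty B$ with $A=\sum_{d_y\in\mathbb R}d_yu_yu_y^*$, $B=\sum_{d_y=-\infty}u_yu_y^*$, acting by $\langle A-\infty B,X\rangle=\langle A,X\rangle-\infty\langle B,X\rangle$. For convex $G:C\to\mathbb R$, $\overline\partial G(x)$ is the set of such extended linear functionals $d$ with $G(x')\ge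 G(x)+\langle d,x'-x\rangle$ for all $x'\in C$ (here $C=\Delta_{\mathcal Y}$, resp. $C=\mathrm{Dens}(\mathcal X)$). *)

From HB Require Import structures.
From mathcomp Require Import all_boot all_order all_algebra all_fingroup.
From mathcomp Require Import all_classical reals ereal.
From mathcomp Require Import complex.
Set Implicit Arguments. Unset Strict Implicit. Unset Printing Implicit Defensive.
Import Order.TTheory GRing.Theory Num.Theory.
Local Open Scope ring_scope.

Definition adjmx (R : realType) (m k : nat) (A : 'M[R[i]]_(m, k)) : 'M[R[i]]_(k, m) :=
  (map_mx (@conjc R) A)^T.

Section Defs.
Variables (R : realType) (n : nat).
Local Notation C := (R[i]).

Definition simplex : set 'rV[R]_n :=
  [set p | (forall y, 0 <= p 0 y) /\ \sum_y p 0 y = 1].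

Definition perm_vec (s : 'S_n) (p : 'rV[R]_n) : 'rV[R]_n := \row_y p 0 (s y).

Definition perm_invariant (f : 'rV[R]_n -> R) : Prop :=
  forall (s : 'S_n) (p : 'rV[R]_n), p \in simplex -> f (perm_vec s p) = f p.

Definition convex_on_simplex (f : 'rV[R]_n -> R) : Prop :=
  forall (p q : 'rV[R]_n) (t : R), p \in simplex -> q \in simplex ->
    0 <= t <= 1 -> f (t *: p + (1 - t) *: q) <= t * f p + (1 - t) * f q.

(* <d, x> for d in (R u {-oo})^n, with -oo * 0 = 0 *)
Definition ext_pair (d : 'I_n -> \bar R) (x : 'rV[R]_n) : \bar R :=
  ((\sum_(y | d y \is a fin_num) fine (d y) * x 0 y)%:E
   + (-oo * (\sum_(y | d y == -oo) x 0 y)%:E))%E.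

Definition ext_subdiff_vec (f : 'rV[R]_n -> R) (x : 'rV[R]_n)
    (d : 'I_n -> \bar R) : Prop :=
  forall x', x' \in simplex -> ((f x)%:E + ext_pair d (x' - x) <= (f x')%:E)%E.


Definition unitary (U : 'M[C]_n) : Prop := U *m adjmx U = 1%:M.

Definition hermitian (A : 'M[C]_n) : Prop := adjmx A = A.

Definition dens : set 'M[C]_n :=
  [set rho | hermitian rho /\
     (forall v : 'cV[C]_n, 0 <= (adjmx v *m rho *m v) 0 0)
     /\ \tr rho = 1].

(* <X, Y> = Tr(X^* Y), real part (real for Hermitian X, Y) *)
Definition hs_pair (X Y : 'M[C]_n) : R := complex.Re (\tr (adjmx X *m Y)).

(* extended Hermitian matrix A - oo B, represented by the pair (A, B) *)
Definition ext_mx_pair (AB : 'M[C]_n * 'M[C]_n) (X : 'M[C]_n) : \bar R :=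
  ((hs_pair AB.1 X)%:E + (-oo * (hs_pair AB.2 X)%:E))%E.

Definition ext_subdiff_mx (G : 'M[C]_n -> R) (x : 'M[C]_n)
    (AB : 'M[C]_n * 'M[C]_n) : Prop :=
  forall x', x' \in dens -> ((G x)%:E + ext_mx_pair AB (x' - x) <= (G x')%:E)%E.

Definition conj_diag (U : 'M[C]_n) (l : 'rV[R]_n) : 'M[C]_n :=
  U *m diag_mx (map_mx (fun x : R => x%:C)%C l) *m adjmx U.

(* U Diag(d) U^* for d in (R u {-oo})^n : the pair (A, B) of A - oo B *)
Definition ext_conj_diag (U : 'M[C]_n) (d : 'I_n -> \bar R)
    : 'M[C]_n * 'M[C]_n :=
  (\sum_(y | d y \is a fin_num) (fine (d y))%:C%C *: (col y U *m adjmx (col y U)),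
   \sum_(y | d y == -oo%E) (col y U *m adjmx (col y U))).

Definition is_eigvec_sorted (A : 'M[C]_n) (l : 'rV[R]_n) : Prop :=
  (forall i j : 'I_n, (i <= j)%N -> l 0 j <= l 0 i) /\
  char_poly A = \prod_(i < n) ('X - ((l 0 i)%:C%C)%:P).

Definition eigvals (A : 'M[C]_n) : 'rV[R]_n := xget 0 (is_eigvec_sorted A).

Definition spectral_fun (f : 'rV[R]_n -> R) (rho : 'M[C]_n) : R :=
  f (eigvals rho).

End Defs.

(* A density matrix is [X = V Diag(mu) V^*] with [mu] in the simplex, and
   [F(X) = f(mu)] because [lambda(X)] is a permutation of [mu].  Pairing
   [U Diag(d) U^*] with [X - U Diag(lam) U^*] gives [<d, z - lam>], where
   [z_y = <u_y, X u_y>] is the image of [mu] under the unistochastic matrix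
   [|(V^* U)_ky|^2].  A rearrangement inequality for doubly stochastic matrices
   yields a permutation [s] with [<d, z - lam> <= <d, s mu - lam>]; the [-oo]
   entries of [d] are handled by a large penalty, since the subgradient
   inequality forces [lam] to vanish on them.  The vector inequality at [s mu]
   then gives the matrix one, and the converse is its restriction to
   [X = U Diag(q) U^*]. *)

From Pilot Require Import Defs.
From HB Require Import structures.
From mathcomp Require Import all_boot all_order all_algebra all_fingroup.
From mathcomp Require Import all_classical reals ereal.
From mathcomp Require Import complex.
From mathcomp Require Import ring lra.
Set Implicit Arguments. Unset Strict Implicit. Unset Printing Implicit Defensive.
Import Order.TTheory GRing.Theory Num.Theory.
Local Open Scope ring_scope.

Section Adjoint.
Variable R : realType.
Local Notation C := R[i].

Lemma adjmxE m k (A : 'M[C]_(m, k)) i j : adjmx A i j = conjc (A j i).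
Proof. by rewrite !mxE. Qed.

Lemma adjmxK m k (A : 'M[C]_(m, k)) : adjmx (adjmx A) = A.
Proof. by apply/matrixP=> i j; rewrite !adjmxE conjcK. Qed.

Lemma adjmxM m p q (A : 'M[C]_(m, p)) (B : 'M[C]_(p, q)) :
  adjmx (A *m B) = adjmx B *m adjmx A.
Proof.
apply/matrixP=> i j; rewrite adjmxE !mxE rmorph_sum; apply: eq_bigr => k _.
by rewrite !adjmxE rmorphM mulrC.
Qed.

Lemma adjmxD m k (A B : 'M[C]_(m, k)) : adjmx (A + B) = adjmx A + adjmx B.
Proof. by apply/matrixP=> i j; rewrite !mxE rmorphD. Qed.

Lemma adjmx0 m k : adjmx (0 : 'M[C]_(m, k)) = 0.
Proof. by apply/matrixP=> i j; rewrite !mxE rmorph0. Qed.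

Lemma adjmxZ_real m k (c : R) (A : 'M[C]_(m, k)) :
  adjmx (c%:C%C *: A) = c%:C%C *: adjmx A.
Proof.
apply/matrixP=> i j; rewrite !mxE.
by case: (A j i) => a b /=; congr (_ +i* _)%C; ring.
Qed.

Lemma adjmx_trmxC m k (A : 'M[C]_(m, k)) : adjmx A = map_mx Num.conj A^T.
Proof. by apply/matrixP=> i j; rewrite !mxE. Qed.

Lemma unitary_mulVmx n (U : 'M[C]_n) : unitary U -> adjmx U *m U = 1%:M.
Proof. exact: mulmx1C. Qed.

End Adjoint.

Section ComplexRe.
Variable R : realType.
Local Notation C := R[i].

Lemma ReD (x y : C) : complex.Re (x + y) = complex.Re x + complex.Re y.
Proof. exact: (raddfD (@complex.Re R : Rcomplex R -> R)). Qed.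

Lemma ReB (x y : C) : complex.Re (x - y) = complex.Re x - complex.Re y.
Proof. exact: (raddfB (@complex.Re R : Rcomplex R -> R)). Qed.

Lemma Re_sum I (r : seq I) (P : pred I) (F : I -> C) :
  complex.Re (\sum_(i <- r | P i) F i) = \sum_(i <- r | P i) complex.Re (F i).
Proof. exact: (raddf_sum (@complex.Re R : Rcomplex R -> R)). Qed.

Lemma ReM_real (c : R) (x : C) : complex.Re (c%:C%C * x) = c * complex.Re x.
Proof. by case: x => a b /=; rewrite mul0r subr0. Qed.

Lemma Re_ge0 (x : C) : 0 <= x -> 0 <= complex.Re x.
Proof. by rewrite lecE => /andP[]. Qed.

Lemma ge0_Re_real (x : C) : 0 <= x -> x = (complex.Re x)%:C%C.
Proof. by move=> /ger0_Im; case: x => a b /= ->. Qed.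

End ComplexRe.

Section Pairing.
Variables (R : realType) (n : nat).
Local Notation C := R[i].
Implicit Types (U X Y : 'M[C]_n) (v : 'rV[R]_n).

Definition diag_in U X : 'rV[R]_n := \row_y complex.Re ((adjmx U *m X *m U) y y).

Lemma quad_colE U X y :
  (adjmx (col y U) *m X *m col y U) 0 0 = (adjmx U *m X *m U) y y.
Proof.
rewrite !mxE; apply: eq_bigr => k _; rewrite !mxE; congr (_ * _).
by apply: eq_bigr => j _; rewrite !mxE.
Qed.

Lemma diag_inB U X Y : diag_in U (X - Y) = diag_in U X - diag_in U Y.
Proof. by apply/rowP=> y; rewrite [LHS]mxE mulmxBr mulmxBl !mxE ReB. Qed.

Lemma unitary_conj_diagK U (s : 'rV[C]_n) : unitary U ->
  adjmx U *m (U *m diag_mx s *m adjmx U) *m U = diag_mx s.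
Proof.
move=> Uu; rewrite !mulmxA unitary_mulVmx // mul1mx -mulmxA unitary_mulVmx //.
exact: mulmx1.
Qed.

Lemma diag_in_conj_diag U v : unitary U -> diag_in U (conj_diag U v) = v.
Proof.
move=> Uu; apply/rowP=> y.
by rewrite [LHS]mxE /conj_diag unitary_conj_diagK // !mxE eqxx mulr1n.
Qed.

Lemma hs_pairD X Y Z : hs_pair (X + Y) Z = hs_pair X Z + hs_pair Y Z.
Proof. by rewrite /hs_pair adjmxD mulmxDl mxtraceD ReD. Qed.

Lemma hs_pair_sum I (r : seq I) (P : pred I) (F : I -> 'M[C]_n) Z :
  hs_pair (\sum_(i <- r | P i) F i) Z = \sum_(i <- r | P i) hs_pair (F i) Z.
Proof.
have hs_pair0 : hs_pair 0 Z = 0 by rewrite /hs_pair adjmx0 mul0mx mxtrace0.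
exact: (big_morph _ (fun X Y => hs_pairD X Y Z) hs_pair0).
Qed.

Lemma hs_pairZ_real (c : R) X Z : hs_pair (c%:C%C *: X) Z = c * hs_pair X Z.
Proof. by rewrite /hs_pair adjmxZ_real -scalemxAl mxtraceZ ReM_real. Qed.

Lemma hs_pair_rank1 U X y :
  hs_pair (col y U *m adjmx (col y U)) X = diag_in U X 0 y.
Proof.
by rewrite /hs_pair adjmxM adjmxK -mulmxA mxtrace_mulC trace_mx11 quad_colE [RHS]mxE.
Qed.

Lemma ext_mx_pair_conj_diag U d X :
  ext_mx_pair (ext_conj_diag U d) X = ext_pair d (diag_in U X).
Proof.
rewrite /ext_mx_pair /ext_pair !hs_pair_sum.
congr (_%:E + (-oo * _%:E))%E; apply: eq_bigr => y _.
  by rewrite hs_pairZ_real hs_pair_rank1.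
exact: hs_pair_rank1.
Qed.

Lemma diag_in_simplex U X : unitary U -> X \in dens (n:=n) ->
  diag_in U X \in simplex (n:=n).
Proof.
move=> Uu; rewrite !in_setE => -[_ [Xpsd Xtr]]; split.
  by move=> y; rewrite mxE -quad_colE; apply: Re_ge0.
under eq_bigr do rewrite mxE.
rewrite -Re_sum.
have -> : \sum_y (adjmx U *m X *m U) y y = \tr (adjmx U *m X *m U) by [].
by rewrite mxtrace_mulC mulmxA Uu mul1mx Xtr.
Qed.

Lemma conj_diag_dens U v : unitary U -> v \in simplex (n:=n) ->
  conj_diag U v \in dens (n:=n).
Proof.
move=> Uu; rewrite !in_setE => -[v0 v1]; split; [|split].
- rewrite /Defs.hermitian /conj_diag !adjmxM adjmxK mulmxA; congr (_ *m _ *m _).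
  apply/matrixP=> i j; rewrite !mxE.
  case: (eqVneq i j) => [->|_]; first by rewrite !mulr1n conjc_real.
  by rewrite !mulr0n conjc0.
- move=> x.
  have -> : adjmx x *m conj_diag U v *m x = adjmx (adjmx U *m x) *m
      diag_mx (map_mx (fun r : R => r%:C%C) v) *m (adjmx U *m x).
    by rewrite /conj_diag adjmxM adjmxK !mulmxA.
  rewrite mul_mx_diag !mxE; apply: sumr_ge0 => k _; rewrite !mxE.
  rewrite mulrAC mulrC mulr_ge0 ?ler0c //.
  by rewrite mulrC mulcJ_ge0.
- rewrite /conj_diag mxtrace_mulC mulmxA unitary_mulVmx // mul1mx mxtrace_diag.
  under eq_bigr do rewrite mxE.
  by rewrite -(raddf_sum (real_complex R)) v1.
Qed.

End Pairing.

Section Spectrum.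
Variables (R : realType) (n : nat).
Local Notation C := R[i].

Lemma dens_conj_diag (X : 'M[C]_n) : X \in dens (n:=n) ->
  exists2 V : 'M[C]_n, unitary V & X = conj_diag V (diag_in V X).
Proof.
rewrite in_setE => -[Xh [Xpsd _]].
have Xn : X \is normalmx by apply/normalmxP; rewrite -adjmx_trmxC Xh.
set P := spectralmx X; set V := adjmx P.
have Pu : P \is unitarymx := spectral_unitarymx X.
have Vu : unitary V.
  by rewrite /unitary /V adjmxK; apply: mulmx1C; rewrite adjmx_trmxC; apply/unitarymxP.
have XV : X = V *m diag_mx (spectral_diag X) *m adjmx V.
  by rewrite /V adjmxK adjmx_trmxC -invmx_unitary //; exact: orthomx_spectralP.
exists V => //; rewrite /conj_diag {1}XV; congr (_ *m diag_mx _ *m _).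
have Xkk k : (adjmx V *m X *m V) k k = spectral_diag X 0 k.
  by rewrite {1}XV unitary_conj_diagK // mxE eqxx mulr1n.
apply/rowP=> k; rewrite mxE [diag_in _ _ _ _]mxE Xkk; apply: ge0_Re_real.
by rewrite -Xkk -quad_colE; exact: Xpsd.
Qed.

Lemma char_poly_similar (A B M : 'M[C]_n) : B *m A = 1%:M ->
  char_poly (A *m M *m B) = char_poly M.
Proof.
move=> BA; set pA := map_mx polyC A; set pB := map_mx polyC B.
have AB : pA *m pB = 1%:M by rewrite -map_mxM mulmx1C // map_mx1.
rewrite /char_poly.
have -> : char_poly_mx (A *m M *m B) = pA *m char_poly_mx M *m pB.
  by rewrite /char_poly_mx !map_mxM mulmxBr mulmxBl mul_mx_scalar -scalemxAl AB scalemx1.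
by rewrite !det_mulmx mulrAC -det_mulmx AB det1 mul1r.
Qed.

Lemma char_poly_conj_diag (V : 'M[C]_n) (mu : 'rV[R]_n) : unitary V ->
  char_poly (conj_diag V mu) = \prod_(i < n) ('X - (mu 0 i)%:C%C%:P).
Proof.
move=> Vu; rewrite char_poly_similar ?unitary_mulVmx //.
rewrite char_poly_trig ?diag_mx_is_trig //.
by apply: eq_bigr => i _; rewrite !mxE eqxx mulr1n.
Qed.

Lemma perm_eq_perm_vec (a b : 'rV[R]_n) :
  perm_eq [seq a 0 i | i <- enum 'I_n] [seq b 0 i | i <- enum 'I_n] ->
  exists s : 'S_n, a = perm_vec s b.
Proof.
move=> ab.
have /tuple_permP[s Es] : perm_eq [seq a 0 i | i <- enum 'I_n] [tuple b 0 i | i < n] by [].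
exists s; apply/rowP=> i; have := congr1 (nth 0 ^~ i) Es.
by rewrite (nth_map i) ?size_enum_ord // nth_ord_enum nth_mktuple mxE tnth_mktuple.
Qed.

Lemma exists_sorted_perm_vec (mu : 'rV[R]_n) :
  exists s : 'S_n, forall i j : 'I_n, (i <= j)%N -> perm_vec s mu 0 j <= perm_vec s mu 0 i.
Proof.
set leT := fun x y : R => y <= x.
set l := sort leT [seq mu 0 i | i <- enum 'I_n].
have size_l : size l = n by rewrite size_sort size_map size_enum_ord.
have [s Es] : exists s : 'S_n, \row_i nth 0 l i = perm_vec s mu.
  apply: perm_eq_perm_vec.
  have -> : [seq (\row_i nth 0 l i) 0 j | j <- enum 'I_n] = l; last by rewrite perm_sort.
  apply: (@eq_from_nth _ 0); rewrite size_map size_enum_ord ?size_l // => i lt_in.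
  by rewrite (nth_map (Ordinal lt_in)) ?size_enum_ord // mxE nth_enum_ord.
exists s => i j le_ij; rewrite -Es !mxE.
apply: (sorted_leq_nth (leT := leT)); rewrite ?inE ?size_l //.
- by move=> y x z; rewrite /leT => ? ?; apply: le_trans; eassumption.
- by move=> x; rewrite /leT.
- by apply: sort_sorted => x y; apply: le_total.
Qed.

Lemma eigvals_conj_diag (V : 'M[C]_n) (mu : 'rV[R]_n) : unitary V ->
  exists s : 'S_n, eigvals (conj_diag V mu) = perm_vec s mu.
Proof.
move=> Vu; have Echar := char_poly_conj_diag mu Vu.
have [_ ] : is_eigvec_sorted (conj_diag V mu) (eigvals (conj_diag V mu)).
  apply: xgetPex; have [s sorted_s] := exists_sorted_perm_vec mu.
  exists (perm_vec s mu); split => //; rewrite Echar (reindex_inj (@perm_inj _ s)).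
  by apply: eq_bigr => i _; rewrite mxE.
rewrite Echar => Eprod; apply: perm_eq_perm_vec.
apply: (perm_map_inj (@complexI R)); rewrite -!map_comp.
apply: prod_XsubC_eq; rewrite !big_map; rewrite [index_enum _]unlock in Eprod.
exact: esym Eprod.
Qed.

Lemma spectral_fun_conj_diag (f : 'rV[R]_n -> R) (V : 'M[C]_n) (mu : 'rV[R]_n) :
  perm_invariant f -> unitary V -> mu \in simplex (n:=n) ->
  spectral_fun f (conj_diag V mu) = f mu.
Proof.
move=> f_perm Vu muS; rewrite /spectral_fun.
by have [s ->] := eigvals_conj_diag mu Vu; exact: f_perm.
Qed.

End Spectrum.

Section Rearrangement.
Variables (R : realType) (n : nat).
Implicit Types (Y K : {set 'I_n}) (P : 'I_n -> 'I_n -> R).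

Lemma psumr_ge_term (I : finType) (Q : pred I) (F : I -> R) i :
  (forall j, Q j -> 0 <= F j) -> Q i -> 0 <= F i <= \sum_(j | Q j) F j.
Proof.
move=> F_ge0 Qi; rewrite F_ge0 //= (bigD1 i) //= lerDl.
by apply: sumr_ge0 => j /andP[Qj _]; exact: F_ge0.
Qed.

Lemma bounded_divfK (x s : R) : 0 <= x <= s -> x / s * s = x.
Proof.
case/andP=> x_ge0 le_xs; have [s0|s_neq0] := eqVneq s 0; last exact: divfK.
by move: le_xs; rewrite s0 => le_x0; apply/eqP; rewrite mulr0 eq_sym eq_le le_x0.
Qed.

Lemma contraction_gain (a b A B s : R) :
  0 <= s -> A <= a * s -> B <= b * s -> (s = 0 -> A = 0 /\ B = 0) ->
  a * ((1 - s) * b + B) + A * b <= a * b + A / s * B.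
Proof.
move=> s_ge0 A_le B_le AB0; have [s0|s_neq0] := eqVneq s 0.
  by have [-> ->] := AB0 s0; rewrite s0; lra.
have gain : 0 <= (a * s - A) * (b * s - B) / s by rewrite divr_ge0 ?mulr_ge0 ?subr_ge0.
suff : a * b + A / s * B - (a * ((1 - s) * b + B) + A * b) =
       (a * s - A) * (b * s - B) / s by lra.
by field.
Qed.

Definition dstoch_on Y K P :=
  [/\ forall y k, 0 <= P y k,
      forall y, y \in Y -> \sum_(k in K) P y k = 1 &
      forall k, k \in K -> \sum_(y in Y) P y k = 1].

(* The doubly stochastic matrix on [(Y :\ y0) x (K :\ k0)] obtained from [P]
   by redistributing the mass of row [y0] and column [k0]; when [P y0 k0 = 1]
   the correction term vanishes because [x / 0 = 0]. *)
Definition dstoch_contract P y0 k0 : 'I_n -> 'I_n -> R :=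
  fun y k => P y k + P y k0 / (1 - P y0 k0) * P y0 k.

Section Contract.
Variables (Y K : {set 'I_n}) (P : 'I_n -> 'I_n -> R) (y0 k0 : 'I_n).
Hypotheses (dsP : dstoch_on Y K P) (Yy0 : y0 \in Y) (Kk0 : k0 \in K).

Let s0 := 1 - P y0 k0.

Lemma dstoch_col_rest : \sum_(y in Y :\ y0) P y k0 = s0.
Proof.
by have [_ _ Pcol] := dsP; rewrite /s0 -(Pcol k0 Kk0) (big_setD1 y0 Yy0) addrAC subrr add0r.
Qed.

Lemma dstoch_row_rest : \sum_(k in K :\ k0) P y0 k = s0.
Proof.
by have [_ Prow _] := dsP; rewrite /s0 -(Prow y0 Yy0) (big_setD1 k0 Kk0) addrAC subrr add0r.
Qed.

Lemma dstoch_contract_on :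
  dstoch_on (Y :\ y0) (K :\ k0) (dstoch_contract P y0 k0).
Proof.
have [P0 Prow Pcol] := dsP; rewrite /dstoch_contract -/s0.
have s0_ge0 : 0 <= s0 by rewrite -dstoch_col_rest sumr_ge0.
split=> [y k | y Yy | k Kk].
- by rewrite addr_ge0 ?mulr_ge0 ?invr_ge0 ?P0.
- have /setD1P[_ Yy'] := Yy.
  rewrite big_split /= -mulr_sumr dstoch_row_rest bounded_divfK; last first.
    by rewrite -dstoch_col_rest psumr_ge_term.
  by rewrite -(Prow y Yy') (big_setD1 k0 Kk0) addrC.
- have /setD1P[_ Kk'] := Kk.
  rewrite big_split /= -mulr_suml -mulr_suml dstoch_col_rest.
  rewrite mulrC mulrA mulrAC bounded_divfK; last first.
    by rewrite -dstoch_row_rest psumr_ge_term.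
  by rewrite -(Pcol k Kk') (big_setD1 y0 Yy0) addrC.
Qed.

End Contract.

Variables (w mu : 'I_n -> R).

Definition dstoch_value Y K P := \sum_(y in Y) w y * \sum_(k in K) P y k * mu k.

Lemma dstoch_value_contract Y K P y0 k0 :
  dstoch_on Y K P -> y0 \in Y -> k0 \in K ->
  (forall y, y \in Y -> w y <= w y0) -> (forall k, k \in K -> mu k <= mu k0) ->
  dstoch_value Y K P <=
  w y0 * mu k0 + dstoch_value (Y :\ y0) (K :\ k0) (dstoch_contract P y0 k0).
Proof.
move=> dsP Yy0 Kk0 wmax mumax; rewrite /dstoch_value /dstoch_contract.
move Es0 : (1 - P y0 k0) => s0.
set A := \sum_(y in Y :\ y0) w y * P y k0.
set B := \sum_(k in K :\ k0) P y0 k * mu k.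
set T := \sum_(y in Y :\ y0) w y * \sum_(k in K :\ k0) P y k * mu k.
have -> : \sum_(y in Y) w y * \sum_(k in K) P y k * mu k =
          w y0 * ((1 - s0) * mu k0 + B) + (A * mu k0 + T).
  rewrite (big_setD1 y0 Yy0) (big_setD1 k0 Kk0) /= -Es0 subKr; congr (_ + _).
  rewrite /A /T mulr_suml -big_split /=; apply: eq_bigr => y _.
  by rewrite (big_setD1 k0 Kk0) /=; ring.
have -> : \sum_(y in Y :\ y0) w y * \sum_(k in K :\ k0)
            (P y k + P y k0 / s0 * P y0 k) * mu k = T + A / s0 * B.
  rewrite /A /B mulr_suml mulr_suml -big_split /=; apply: eq_bigr => y _.
  under eq_bigr do rewrite mulrDl -mulrA.
  by rewrite big_split /= -mulr_sumr; ring.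
have col_rest : \sum_(y in Y :\ y0) P y k0 = s0.
  by rewrite -Es0; exact: dstoch_col_rest dsP Yy0 Kk0.
have row_rest : \sum_(k in K :\ k0) P y0 k = s0.
  by rewrite -Es0; exact: dstoch_row_rest dsP Yy0 Kk0.
have [P0 _ _] := dsP.
have le_col y : y \in Y :\ y0 -> 0 <= P y k0 <= s0.
  by rewrite -col_rest; apply: psumr_ge_term.
have le_row k : k \in K :\ k0 -> 0 <= P y0 k <= s0.
  by rewrite -row_rest; apply: psumr_ge_term.
have s0_ge0 : 0 <= s0 by rewrite -col_rest sumr_ge0.
have A_le : A <= w y0 * s0.
  rewrite -col_rest mulr_sumr ler_sum // => y Yy; have /andP[Pyk0_ge0 _] := le_col y Yy.
  by rewrite ler_wpM2r // wmax //; case/setD1P: Yy.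
have B_le : B <= mu k0 * s0.
  rewrite -row_rest mulr_sumr ler_sum // => k Kk; have /andP[Py0k_ge0 _] := le_row k Kk.
  by rewrite mulrC ler_wpM2r // mumax //; case/setD1P: Kk.
have AB0 : s0 = 0 -> A = 0 /\ B = 0.
  move=> s0_eq0; split; [apply: big1 => y Yy | apply: big1 => k Kk].
  - by have := le_col y Yy; rewrite s0_eq0 -eq_le => /eqP <-; rewrite mulr0.
  - by have := le_row k Kk; rewrite s0_eq0 -eq_le => /eqP <-; rewrite mul0r.
by have := contraction_gain s0_ge0 A_le B_le AB0; lra.
Qed.

Lemma dstoch_rearrangement_on Y K P : dstoch_on Y K P ->
  exists s : 'S_n, {in Y, forall y, s y \in K} /\
    dstoch_value Y K P <= \sum_(y in Y) w y * mu (s y).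
Proof.
have [m] := ubnP #|Y|; elim: m Y K P => // m IH Y K P ltYm dsP.
have [P0 Prow _] := dsP.
have [->|[y1 Yy1]] := set_0Vmem Y.
  by exists 1%g; split=> [y|]; rewrite ?inE // /dstoch_value !big_set0.
have [K0|[k1 Kk1]] := set_0Vmem K.
  by have := Prow y1 Yy1; rewrite K0 big_set0 => /eqP; rewrite eq_sym oner_eq0.
have [y0 Yy0 wmax] : exists2 y0, y0 \in Y & forall y, y \in Y -> w y <= w y0.
  by case: (@arg_maxP _ R _ y1 (mem Y) w Yy1) => y0 ? ?; exists y0.
have [k0 Kk0 mumax] : exists2 k0, k0 \in K & forall k, k \in K -> mu k <= mu k0.
  by case: (@arg_maxP _ R _ k1 (mem K) mu Kk1) => k0 ? ?; exists k0.
have ltY'm : (#|Y :\ y0| < m)%N by move: ltYm; rewrite (cardsD1 y0 Y) Yy0.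
have [s [sK le_s]] := IH _ _ _ ltY'm (dstoch_contract_on dsP Yy0 Kk0).
pose s' := (s * tperm k0 (s y0))%g.
have s'y0 : s' y0 = k0 by rewrite permM tpermR.
have s'E y : y \in Y :\ y0 -> s' y = s y.
  move=> Yy'; have /setD1P[syk0 _] := sK y Yy'.
  by rewrite permM tpermD // 1?eq_sym // (inj_eq perm_inj); case/setD1P: Yy'.
exists s'; split=> [y Yy' | ].
  have [->|ne] := eqVneq y y0; first by rewrite s'y0.
  have Y'y : y \in Y :\ y0 by rewrite !inE ne Yy'.
  by rewrite s'E //; case/setD1P: (sK y Y'y).
apply: (le_trans (dstoch_value_contract dsP Yy0 Kk0 wmax mumax)).
rewrite (big_setD1 y0 Yy0) /= s'y0 lerD2l.
by under [X in _ <= X]eq_bigr => y Yy' do rewrite s'E //.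
Qed.

Definition doubly_stochastic P :=
  [/\ forall y k, 0 <= P y k, forall y, \sum_k P y k = 1 & forall k, \sum_y P y k = 1].

Lemma doubly_stochastic_on P :
  doubly_stochastic P -> dstoch_on [set: 'I_n]%SET [set: 'I_n]%SET P.
Proof.
case=> P0 Prow Pcol; split=> // [y _ | k _]; [rewrite -(Prow y) | rewrite -(Pcol k)];
  by apply: eq_bigl => ?; rewrite inE.
Qed.

Lemma dstoch_rearrangement P : doubly_stochastic P ->
  exists s : 'S_n, \sum_y w y * \sum_k P y k * mu k <= \sum_y w y * mu (s y).
Proof.
move=> /doubly_stochastic_on/dstoch_rearrangement_on[s [_ le_s]]; exists s; move: le_s.
have sumT (F : 'I_n -> R) : \sum_(y in [set: 'I_n]%SET) F y = \sum_y F y.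
  by apply: eq_bigl => y; rewrite inE.
by rewrite /dstoch_value !sumT; under eq_bigr do rewrite sumT.
Qed.

End Rearrangement.

Section Unistochastic.
Variables (R : realType) (n : nat).
Local Notation C := R[i].

Lemma diag_in_conj_diag_dstoch (U V : 'M[C]_n) (mu : 'rV[R]_n) :
  unitary U -> unitary V ->
  exists2 P, doubly_stochastic P &
    forall y, diag_in U (conj_diag V mu) 0 y = \sum_k P y k * mu 0 k.
Proof.
move=> Uu Vu.
have WtW : adjmx (adjmx V *m U) *m (adjmx V *m U) = 1%:M.
  rewrite adjmxM adjmxK !mulmxA -[adjmx U *m V *m adjmx V]mulmxA Vu mulmx1.
  exact: unitary_mulVmx.
have conjE : adjmx U *m conj_diag V mu *m U = adjmx (adjmx V *m U) *m
    diag_mx (map_mx (fun r : R => r%:C%C) mu) *m (adjmx V *m U).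
  by rewrite /conj_diag adjmxM adjmxK !mulmxA.
move: (adjmx V *m U) WtW conjE => W WtW conjE; have WWt := mulmx1C WtW.
pose P y k := complex.Re (conjc (W k y) * W k y).
exists P.
  split=> [y k | y | k]; rewrite /P.
  - by apply: Re_ge0; rewrite mulrC mulcJ_ge0.
  - rewrite -Re_sum; have -> : \sum_k conjc (W k y) * W k y = (adjmx W *m W) y y.
      by rewrite !mxE; apply: eq_bigr => k _; rewrite !mxE.
    by rewrite WtW mxE eqxx.
  - rewrite -Re_sum; have -> : \sum_y conjc (W k y) * W k y = (W *m adjmx W) k k.
      by rewrite !mxE; apply: eq_bigr => y _; rewrite !mxE mulrC.
    by rewrite WWt mxE eqxx.
move=> y; rewrite [LHS]mxE conjE mul_mx_diag !mxE Re_sum; apply: eq_bigr => k _.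
by rewrite !mxE mulrAC mulrC ReM_real mulrC.
Qed.

End Unistochastic.

Section Simplex.
Variables (R : realType) (n : nat).
Implicit Types (x lam mu : 'rV[R]_n).

Lemma simplex_sumB x lam : x \in simplex (n:=n) -> lam \in simplex (n:=n) ->
  \sum_y (x - lam) 0 y = 0.
Proof.
rewrite !in_setE => -[_ x1] [_ lam1]; under eq_bigr do rewrite !mxE.
by rewrite sumrB x1 lam1 subrr.
Qed.

Lemma simplex_le1 x k : x \in simplex (n:=n) -> 0 <= x 0 k <= 1.
Proof.
rewrite in_setE => -[x_ge0 x1]; rewrite -x1.
by apply: psumr_ge_term => // y _; exact: x_ge0.
Qed.

Lemma delta_simplex (j : 'I_n) : (delta_mx 0 j : 'rV[R]_n) \in simplex (n:=n).
Proof.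
rewrite in_setE; split=> [k|]; first by rewrite mxE ler0n.
rewrite (bigD1 j) //= big1 => [|k /negbTE kj]; last by rewrite mxE kj andbF.
by rewrite mxE !eqxx /= addr0.
Qed.

Lemma perm_vec_simplex (s : 'S_n) mu :
  mu \in simplex (n:=n) -> perm_vec s mu \in simplex (n:=n).
Proof.
rewrite !in_setE => -[mu_ge0 mu1]; split=> [y|]; first by rewrite mxE.
by rewrite -mu1 [RHS](reindex_inj (@perm_inj _ s)); apply: eq_bigr => y _; rewrite mxE.
Qed.

End Simplex.

Section ExtPair.
Variables (R : realType) (n : nat) (d : 'I_n -> \bar R).
Hypothesis d_fin : forall y, d y != +oo%E.
Implicit Types (x lam : 'rV[R]_n).

Lemma fin_num_ninfty y : (d y \is a fin_num) = (d y != -oo%E).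
Proof. by move: (d_fin y); case: (d y). Qed.

Lemma ext_pair_ninfty_eq0 x : \sum_(y | d y == -oo%E) x 0 y = 0 ->
  ext_pair d x = (\sum_(y | d y \is a fin_num) fine (d y) * x 0 y)%:E.
Proof. by rewrite /ext_pair => ->; rewrite mule0 adde0. Qed.

Lemma ext_pair_ninfty_gt0 x : 0 < \sum_(y | d y == -oo%E) x 0 y ->
  ext_pair d x = -oo%E.
Proof. by rewrite /ext_pair => pos; rewrite mulNyr gtr0_sg // mul1e addeNy. Qed.

Lemma ext_pair_ninfty_lt0 x : \sum_(y | d y == -oo%E) x 0 y < 0 ->
  ext_pair d x = +oo%E.
Proof. by rewrite /ext_pair => neg; rewrite mulNyr ltr0_sg // mulN1e /= addey. Qed.

Lemma ext_pair_all_ninfty x lam : (forall y, d y == -oo%E) ->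
  x \in simplex (n:=n) -> lam \in simplex (n:=n) -> ext_pair d (x - lam) = 0%E.
Proof.
move=> dN xS lamS; rewrite ext_pair_ninfty_eq0; last first.
  by rewrite -[RHS](simplex_sumB xS lamS); apply: eq_bigl => y; rewrite dN.
by rewrite big_pred0 // => y; rewrite fin_num_ninfty dN.
Qed.

Lemma ext_subdiff_vec_ninfty (f : 'rV[R]_n -> R) lam :
  lam \in simplex (n:=n) -> ext_subdiff_vec f lam d ->
  (forall y, d y == -oo%E) \/ (forall y, d y == -oo%E -> lam 0 y = 0).
Proof.
move=> lamS sub_f; have [j dj_fin|all_fin] := pickP (fun y => d y \is a fin_num).
  right=> y dy; have := lamS; rewrite in_setE => -[lam_ge0 _].
  apply/eqP; rewrite eq_le lam_ge0 andbT leNgt; apply/negP => lam_y_gt0.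
  (* at the vertex [j] the pairing would be [+oo] *)
  have := sub_f _ (@delta_simplex R n j); rewrite ext_pair_ninfty_lt0 ?addey //.
  rewrite (eq_bigr (fun k => - lam 0 k)) => [|k dk]; last first.
    rewrite !mxE eqxx /=; case: eqP => [kj|_]; last by rewrite sub0r.
    by move: dj_fin; rewrite fin_num_ninfty -kj dk.
  rewrite sumrN oppr_lt0 (lt_le_trans lam_y_gt0) // (bigD1 y) //= lerDl.
  by apply: sumr_ge0 => k _; exact: lam_ge0.
by left=> y; have /= := all_fin y; rewrite fin_num_ninfty => /negbFE.
Qed.

End ExtPair.

Section PenalisedRearrangement.
Variables (R : realType) (n : nat).

Lemma weighted_sum_norm_le (Q : pred 'I_n) (a x : 'I_n -> R) :
  (forall y, 0 <= x y <= 1) ->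
  `|\sum_(y | Q y) a y * x y| <= \sum_(y | Q y) `|a y|.
Proof.
move=> x01; apply: le_trans (ler_norm_sum _ _ _) _; apply: ler_sum => y _.
have /andP[x_ge0 x_le1] := x01 y.
by rewrite normrM (ger0_norm x_ge0) ler_piMr.
Qed.

Lemma exists_scale_ge (c : R) (mu : 'I_n -> R) : 0 <= c ->
  exists2 M, 0 <= M & forall k, 0 < mu k -> c <= M * mu k.
Proof.
move=> c_ge0; exists (\sum_(k | 0 < mu k) c / mu k).
  by apply: sumr_ge0 => k /ltW mu_k; rewrite divr_ge0.
move=> k mu_k; rewrite -ler_pdivrMr // (bigD1 k) //= lerDl.
by apply: sumr_ge0 => j /andP[/ltW mu_j _]; rewrite divr_ge0.
Qed.

Lemma sum_penalty (N : pred 'I_n) (a x : 'I_n -> R) (M : R) :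
  \sum_y (if N y then - M else a y) * x y =
  \sum_(y | ~~ N y) a y * x y - M * \sum_(y | N y) x y.
Proof.
rewrite (bigID N) /= addrC mulr_sumr -sumrN; congr (_ + _).
  by apply: eq_bigr => y /negbTE ->.
by apply: eq_bigr => y ->; rewrite mulNr.
Qed.

(* Penalising the rows in [N] by a large weight [-M] forces the rearranging
   permutation to send [N] to zeros of [mu]. *)
Lemma dstoch_rearrangement_avoid (N : pred 'I_n) (a mu : 'I_n -> R) P :
  doubly_stochastic P -> (forall k, 0 <= mu k <= 1) ->
  (forall y, N y -> \sum_k P y k * mu k = 0) ->
  exists s : 'S_n, (forall y, N y -> mu (s y) = 0) /\
    \sum_(y | ~~ N y) a y * \sum_k P y k * mu k <= \sum_(y | ~~ N y) a y * mu (s y).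
Proof.
move=> dsP mu01 zN; have [P0 Prow _] := dsP.
have z01 y : 0 <= \sum_k P y k * mu k <= 1.
  apply/andP; split.
    by apply: sumr_ge0 => k _; rewrite mulr_ge0 //; case/andP: (mu01 k).
  rewrite -(Prow y); apply: ler_sum => k _.
  by rewrite ler_piMr //; case/andP: (mu01 k).
set K := \sum_(y | ~~ N y) `|a y|.
have [M M_ge0 M_ge] : exists2 M, 0 <= M & forall k, 0 < mu k -> 2 * K + 1 <= M * mu k.
  by apply: exists_scale_ge; rewrite addr_ge0 ?mulr_ge0 ?sumr_ge0.
have [s] := dstoch_rearrangement (fun y => if N y then - M else a y) mu dsP.
have zN0 : \sum_(y | N y) \sum_k P y k * mu k = 0 by apply: big1.
rewrite !sum_penalty zN0 mulr0 subr0 => le_s; set S := \sum_(y | N y) mu (s y) in le_s.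
have sN y : N y -> mu (s y) = 0.
  move=> Ny; have /andP[mu_ge0 _] := mu01 (s y).
  apply/eqP; rewrite eq_le mu_ge0 andbT leNgt; apply/negP => mu_pos.
  have /andP[_ le_S] : 0 <= mu (s y) <= S.
    rewrite /S; apply: (psumr_ge_term (F := fun j => mu (s j))) => // j _.
    by case/andP: (mu01 (s j)).
  have le_MS : M * mu (s y) <= M * S := ler_wpM2l M_ge0 le_S.
  have zb : `|\sum_(y | ~~ N y) a y * \sum_k P y k * mu k| <= K :=
    weighted_sum_norm_le _ _ z01.
  have mb : `|\sum_(y | ~~ N y) a y * mu (s y)| <= K :=
    weighted_sum_norm_le _ _ (fun y => mu01 (s y)).
  move: zb mb; rewrite !ler_norml => /andP[? ?] /andP[? ?].
  have := M_ge _ mu_pos; set MS := M * S in le_s le_MS; set Ms := M * mu (s y) in le_MS *.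
  lra.
exists s; split=> //; suff S0 : S = 0 by rewrite S0 mulr0 subr0 in le_s.
by apply: big1 => y /sN.
Qed.

End PenalisedRearrangement.

Section PermutedPairing.
Variables (R : realType) (n : nat) (d : 'I_n -> \bar R).
Hypothesis d_fin : forall y, d y != +oo%E.

Lemma le_ext_pair_perm (lam z mu : 'rV[R]_n) P :
  lam \in simplex (n:=n) -> z \in simplex (n:=n) -> mu \in simplex (n:=n) ->
  doubly_stochastic P -> (forall y, z 0 y = \sum_k P y k * mu 0 k) ->
  (forall y, d y == -oo%E) \/ (forall y, d y == -oo%E -> lam 0 y = 0) ->
  exists s : 'S_n, (ext_pair d (z - lam) <= ext_pair d (perm_vec s mu - lam))%E.
Proof.
move=> lamS zS muS dsP zE [all_ninfty|lam_ninfty].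
  by exists 1%g; rewrite !ext_pair_all_ninfty ?perm_vec_simplex.
have sumN x : \sum_(y | d y == -oo%E) (x - lam) 0 y = \sum_(y | d y == -oo%E) x 0 y.
  by apply: eq_bigr => y dy; rewrite !mxE lam_ninfty // subr0.
have := zS; have := muS; rewrite !in_setE => -[mu_ge0 _] [z_ge0 _].
have [z_pos|z_le0] := ltP 0 (\sum_(y | d y == -oo%E) z 0 y).
  by exists 1%g; rewrite ext_pair_ninfty_gt0 ?sumN ?leNye.
have zN0 : \sum_(y | d y == -oo%E) z 0 y = 0.
  by apply/eqP; rewrite eq_le z_le0 sumr_ge0.
have zN y : d y == -oo%E -> \sum_k P y k * mu 0 k = 0.
  by rewrite -zE; move: y; apply/(psumr_eq0P (fun y _ => z_ge0 y)); rewrite zN0.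
have mu01 k : 0 <= mu 0 k <= 1 by apply: simplex_le1.
have [s [muN le_s]] := dstoch_rearrangement_avoid (fun y => fine (d y)) dsP mu01 zN.
exists s; rewrite !ext_pair_ninfty_eq0 ?sumN ?lee_fin //; last first.
  by apply: big1 => y dy; rewrite mxE muN.
have fin_sumB x : \sum_(y | d y \is a fin_num) fine (d y) * (x - lam) 0 y =
    \sum_(y | d y \is a fin_num) fine (d y) * x 0 y -
    \sum_(y | d y \is a fin_num) fine (d y) * lam 0 y.
  by rewrite -sumrB; apply: eq_bigr => y _; rewrite !mxE mulrBr.
rewrite !fin_sumB lerD2r !(eq_bigl _ _ (fin_num_ninfty d_fin)).
under eq_bigr do rewrite zE.
by under [X in _ <= X]eq_bigr do rewrite mxE.
Qed.

End PermutedPairing.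

Theorem lemma4p2 (R : realType) (n : nat) (f : 'rV[R]_n -> R) :
  perm_invariant f -> convex_on_simplex f ->
  forall (lam : 'rV[R]_n) (U : 'M[R[i]]_n) (d : 'I_n -> \bar R),
    lam \in @simplex R n -> unitary U -> (forall y, d y != +oo%E) ->
    (ext_subdiff_vec f lam d <->
     ext_subdiff_mx (spectral_fun f) (conj_diag U lam) (ext_conj_diag U d)).
Proof.
move=> f_perm _ lam U d lamS Uu d_fin.
have F_lam := spectral_fun_conj_diag f_perm Uu lamS.
have pairE X : ext_mx_pair (ext_conj_diag U d) (X - conj_diag U lam) =
               ext_pair d (diag_in U X - lam).
  by rewrite ext_mx_pair_conj_diag diag_inB diag_in_conj_diag.
split=> [sub_f X XS | sub_F q qS].
  have [V Vu XE] := dens_conj_diag XS; set mu := diag_in V X in XE.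
  have muS : mu \in simplex (n:=n) := diag_in_simplex Vu XS.
  have zS := diag_in_simplex Uu XS; rewrite XE in zS.
  have [P dsP zE] := diag_in_conj_diag_dstoch mu Uu Vu.
  have [s le_s] := le_ext_pair_perm d_fin lamS zS muS dsP zE
    (ext_subdiff_vec_ninfty d_fin lamS sub_f).
  rewrite F_lam pairE XE spectral_fun_conj_diag // -(f_perm s mu muS).
  exact: le_trans (leeD2l _ le_s) (sub_f _ (perm_vec_simplex s muS)).
have := sub_F _ (conj_diag_dens Uu qS).
by rewrite F_lam pairE diag_in_conj_diag // spectral_fun_conj_diag.
Qed.
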